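(* The MaBB process on $\Omega_{G,m-1}\times V$ is reversible with respect to the probability measure $\pi^{\mathrm{MaBB}}((\xi,v))\propto\pi^{\mathrm{BB}(G,s,m)}(C_{\xi,v})\,(\xi(v)+1)$. Moreover, if $s=b/a$ with $a,b$ coprime positive integers, then for every $\xi\in\Omega_{G,m-1}$ and $v\in V$, \[\pi_\xi(v):=\frac{\pi^{\mathrm{MaBB}}((\xi,v))}{\sum_{y\in V}\pi^{\mathrm{MaBB}}((\xi,y))}=\frac{a\xi(v)+b}{a(m-1)+bn}.\]
   Context: $G=(V,E,(r_e))$ finite connected, $V=\{1,\dots,n\}$, $r_e>0$; $s>0$ rational when the second statement is used; $m\ge2$; $\Omega_{G,k}=\{\xi\in\mathbb N_0^V:\sum_v\xi(v)=k\}$. $\mathrm{BB}(G,s,k)$ is the Markov chain on $\Omega_{G,k}$ with generator $\sum_e\frac{r_e}{\sum_{e'}r_{e'}}(\mathcal P_e-1)$, where an update on $e=\{v,w\}$ replaces $(\xi(v),\xi(w))$ by $(X,\xi(v)+\xi(w)-X)$, $X\sim\mathrm{BetaBin}(\xi(v)+\xi(w),s,s)$; $\mathrm P_e^{\mathrm{BB}(G,s,k)}(\xi,\xi')$ is the corresponding one-step kernel; its equilibrium is $\pi^{\mathrm{BB}(G,s,k)}(\xi)\propto\prod_v\Gamma(s+\xi(v))/\xi(v)!$. $C_{\xi,v}=\xi+\delta_v$. For $e=\{v,w\}$, $\xi,\xi'\in\Omega_{G,m-1}$ with $\mathrm P_e^{\mathrm{BB}(G,s,m-1)}(\xi,\xi')>0$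 and $x,y\in e$: $\mathrm P_{e,\xi,\xi'}(x,y)=\frac{\xi'(y)+1}{\xi(v)+\xi(w)+1}\cdot\frac{\mathrm P_e^{\mathrm{BB}(G,s,m)}(C_{\xi,x},C_{\xi',y})}{\mathrm P_e^{\mathrm{BB}(G,s,m-1)}(\xi,\xi')}$. The MaBB is the continuous-time Markov chain on $\Omega_{G,m-1}\times V$ in which each edge $e$ rings at rate $r_e/\sum_{e'}r_{e'}$; when $e$ rings in state $(\xi,y)$, the unmarked configuration moves to $\xi'$ with probability $\mathrm P_e^{\mathrm{BB}(G,s,m-1)}(\xi,\xi')$; if $y\notin e$ the mark stays, and if $y\in e$ the mark moves to $y'\in e$ with probability $\mathrm P_{e,\xi,\xi'}(y,y')$. *)

From HB Require Import structures.
From mathcomp Require Import all_boot all_order all_algebra.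
Set Implicit Arguments. Unset Strict Implicit. Unset Printing Implicit Defensive.
Import Order.TTheory GRing.Theory Num.Theory.
Local Open Scope ring_scope.

Definition config (n : nat) := {ffun 'I_n -> nat}.

Definition inOmega (n k : nat) (xi : config n) : bool := (\sum_i xi i == k)%N.

(* Sum of F over Omega_{G,k} (each element of Omega_{G,k} is enumerated once,
   via configurations with values in 'I_k.+1). *)
Definition sumOmega (R : realFieldType) (n k : nat) (F : config n -> R) : R :=
  \sum_(f : {ffun 'I_n -> 'I_k.+1} | (\sum_i (f i : nat) == k)%N)
     F [ffun i => (f i : nat)].

Definition addPart (n : nat) (xi : config n) (v : 'I_n) : config n :=
  [ffun i => (xi i + (i == v))%N].

(* rising factorial (s)_k = Gamma(s+k)/Gamma(s) *)
Definition rising (R : realFieldType) (s : R) (k : nat) : R :=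
  \prod_(i < k) (s + i%:R).

(* Beta-binomial pmf BetaBin(N, s, s) at j:
   C(N,j) B(j+s, N-j+s) / B(s,s) = C(N,j) (s)_j (s)_(N-j) / (2s)_N *)
Definition betaBin (R : realFieldType) (s : R) (N j : nat) : R :=
  if (j <= N)%N then
    'C(N, j)%:R * rising s j * rising s (N - j) / rising (2 * s) N
  else 0.

(* One-step kernel P_e^{BB(G,s,k)}(xi, xi') of an update on e = {v,w}:
   (xi(v), xi(w)) is replaced by (X, xi(v)+xi(w)-X), X ~ BetaBin(xi(v)+xi(w), s, s). *)
Definition PBB (R : realFieldType) (s : R) (n : nat) (v w : 'I_n)
    (xi xi' : config n) : R :=
  if [forall i, ((i != v) && (i != w)) ==> (xi' i == xi i)]
     && (xi' v + xi' w == xi v + xi w)%N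
  then betaBin s (xi v + xi w) (xi' v) else 0.

Definition Pmark (R : realFieldType) (s : R) (n : nat) (v w : 'I_n)
    (xi xi' : config n) (x y : 'I_n) : R :=
  (xi' y + 1)%:R / (xi v + xi w + 1)%:R
  * (PBB s v w (addPart xi x) (addPart xi' y) / PBB s v w xi xi').

Definition inEdge (n : nat) (v w y : 'I_n) : bool := (y == v) || (y == w).

Definition KMaBB (R : realFieldType) (s : R) (n : nat) (v w : 'I_n)
    (xi : config n) (y : 'I_n) (xi' : config n) (y' : 'I_n) : R :=
  PBB s v w xi xi' *
  (if inEdge v w y then (if inEdge v w y' then Pmark s v w xi xi' y y' else 0)
   else (y' == y)%:R).

(* Total rate sum_{e} r_e, edges e = {v,w} encoded as v < w with E v w. *)
Definition totRate (R : realFieldType) (n : nat) (E : rel 'I_n)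
    (r : 'I_n -> 'I_n -> R) : R :=
  \sum_(v : 'I_n) \sum_(w : 'I_n | (v < w)%N && E v w) r v w.

Definition genMaBB (R : realFieldType) (s : R) (n : nat) (E : rel 'I_n)
    (r : 'I_n -> 'I_n -> R)
    (xi : config n) (y : 'I_n) (xi' : config n) (y' : 'I_n) : R :=
  \sum_(v : 'I_n) \sum_(w : 'I_n | (v < w)%N && E v w)
     (r v w / totRate E r) *
     (KMaBB s v w xi y xi' y' - ((xi == xi') && (y == y'))%:R).

(* Unnormalized BB weight prod_v Gamma(s+xi(v))/xi(v)!, divided by the
   constant Gamma(s)^n (which cancels in the normalization). *)
Definition wBB (R : realFieldType) (s : R) (n : nat) (xi : config n) : R :=
  \prod_i (rising s (xi i) / (xi i)`!%:R).

Definition piBB (R : realFieldType) (s : R) (n k : nat) (xi : config n) : R :=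
  wBB s xi / sumOmega k (@wBB R s n).

Definition wMaBB (R : realFieldType) (s : R) (n m : nat)
    (xi : config n) (v : 'I_n) : R :=
  piBB s m (addPart xi v) * (xi v + 1)%:R.

Definition piMaBB (R : realFieldType) (s : R) (n m : nat)
    (xi : config n) (v : 'I_n) : R :=
  wMaBB s m xi v / sumOmega m.-1 (fun z => \sum_(y : 'I_n) wMaBB s m z y).

From HB Require Import structures.
From mathcomp Require Import all_boot all_order all_algebra.
From mathcomp Require Import ring.
Set Implicit Arguments. Unset Strict Implicit. Unset Printing Implicit Defensive.
Import Order.TTheory GRing.Theory Num.Theory.
Local Open Scope ring_scope.

(* Write siteW k = (s)_k / k! for the one-site beta-binomial weight, so
   that the BB weight of a configuration is the product of its site weights.
   1. The beta-binomial pmf factorises as BetaBin(N,s,s)(j)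
        = N!/(2s)_N * siteW j * siteW (N-j),
      hence every edge update P_e is reversible for the BB weight.
   2. Adding a particle at y multiplies the weight by (s + xi(y))/(xi(y)+1);
      thus the MaBB weight of (xi,y) is proportional to wBB(xi) (s + xi(y)).
   3. Detailed balance of each edge kernel of the MaBB follows: if the mark is
      on the ringing edge this is reversibility of P_e on Omega_{G,m}, applied
      to the configurations with the mark added; otherwise the mark is inert
      and it is reversibility of P_e on Omega_{G,m-1}.  Summing over edges
      gives detailed balance for the generator.
   4. Summing wBB(xi) (s + xi(y)) over y gives wBB(xi) (s n + m - 1), whence
      the conditional law (s + xi(v))/(s n + m - 1) of the mark, which is
      (a xi(v) + b)/(a (m-1) + b n) for s = b/a. *)

Section Weights.

Variables (R : realFieldType) (s : R).
Hypothesis s_pos : 0 < s.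

Definition siteW (k : nat) : R := rising s k / k`!%:R.

Lemma rising_gt0 (t : R) (k : nat) : 0 < t -> 0 < rising t k.
Proof.
move=> t_pos; apply: prodr_gt0 => i _.
by apply: ltr_wpDr => //; rewrite ler0n.
Qed.

Lemma fact_neq0 (k : nat) : (k`!%:R : R) != 0.
Proof. by rewrite pnatr_eq0 -lt0n fact_gt0. Qed.

Lemma siteW_gt0 (k : nat) : 0 < siteW k.
Proof. by apply: divr_gt0; [exact: rising_gt0 | rewrite ltr0n fact_gt0]. Qed.

Lemma siteW_succ (k : nat) : siteW k.+1 * k.+1%:R = siteW k * (s + k%:R).
Proof.
rewrite /siteW /rising big_ord_recr /= factS natrM.
by field; rewrite fact_neq0 addrC natr1 pnatr_eq0.
Qed.

Lemma wBB_gt0 (n : nat) (xi : config n) : 0 < wBB s xi.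
Proof. by apply: prodr_gt0 => i _; exact: siteW_gt0. Qed.

Lemma wBB_addPart (n : nat) (xi : config n) (y : 'I_n) :
  wBB s (addPart xi y) * (xi y + 1)%:R = wBB s xi * (s + (xi y)%:R).
Proof.
rewrite /wBB (bigD1 y) //= [in RHS](bigD1 y) //= -/(siteW _) -/(siteW _).
rewrite (eq_bigr (fun i => siteW (xi i))) => [|i /negbTE iy]; last first.
  by rewrite /addPart ffunE iy addn0.
by rewrite mulrAC /addPart ffunE eqxx addn1 siteW_succ mulrAC.
Qed.

Lemma wBB_pair (n : nat) (v w : 'I_n) (xi : config n) : v != w ->
  wBB s xi = siteW (xi v) * siteW (xi w)
             * \prod_(i | (i != v) && (i != w)) siteW (xi i).
Proof.
move=> vw; rewrite /wBB (bigD1 v) //= (bigD1 w) /=; last by rewrite eq_sym.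
by rewrite mulrA.
Qed.

Lemma betaBinE (N j : nat) : (j <= N)%N ->
  betaBin s N j = N`!%:R / rising (2 * s) N * siteW j * siteW (N - j).
Proof.
move=> jN; rewrite /betaBin jN /siteW -(bin_fact jN) !natrM.
have den_neq0 : rising (2 * s) N != 0.
  by apply: lt0r_neq0; apply: rising_gt0; rewrite mulr_gt0.
by field; rewrite den_neq0 !fact_neq0.
Qed.

End Weights.

Section EdgeUpdate.

Variables (R : realFieldType) (s : R) (n : nat) (v w : 'I_n).
Hypothesis s_pos : 0 < s.
Hypothesis v_neq_w : v != w.

Definition edgeMove (xi xi' : config n) : bool :=
  [forall i, ((i != v) && (i != w)) ==> (xi' i == xi i)]
  && (xi' v + xi' w == xi v + xi w)%N.

Lemma PBBE (xi xi' : config n) :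
  PBB s v w xi xi' = if edgeMove xi xi' then betaBin s (xi v + xi w) (xi' v) else 0.
Proof. by []. Qed.

Lemma edgeMove_sym (xi xi' : config n) : edgeMove xi xi' = edgeMove xi' xi.
Proof.
rewrite /edgeMove eq_sym; congr (_ && _).
by apply/forallP/forallP => H i; apply/implyP => hi; rewrite eq_sym (implyP (H i)).
Qed.

Lemma PBB_neq0 (xi xi' : config n) : edgeMove xi xi' -> PBB s v w xi xi' != 0.
Proof.
move=> mv; rewrite PBBE mv; move: mv => /andP[_ /eqP <-].
rewrite betaBinE ?leq_addr //; apply: lt0r_neq0.
apply: mulr_gt0; [apply: mulr_gt0 | exact: siteW_gt0]; last exact: siteW_gt0.
apply: divr_gt0; first by rewrite ltr0n fact_gt0.
by apply: rising_gt0; rewrite mulr_gt0.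
Qed.

Lemma wBB_PBB_rev (xi xi' : config n) :
  wBB s xi * PBB s v w xi xi' = wBB s xi' * PBB s v w xi' xi.
Proof.
rewrite !PBBE (edgeMove_sym xi'); case mv: (edgeMove xi xi'); last by rewrite !mulr0.
move: mv => /andP[/forallP off /eqP sum_eq].
have off_eq : \prod_(i | (i != v) && (i != w)) siteW s (xi' i)
              = \prod_(i | (i != v) && (i != w)) siteW s (xi i).
  by apply: eq_bigr => i iE; rewrite (eqP (implyP (off i) iE)).
rewrite (wBB_pair s xi v_neq_w) (wBB_pair s xi' v_neq_w) off_eq.
have rest_eq : (xi v + xi w - xi' v = xi' w)%N by rewrite -sum_eq addKn.
have le_xi' : (xi' v <= xi v + xi w)%N by rewrite -sum_eq leq_addr.
rewrite sum_eq (betaBinE s_pos le_xi') (betaBinE s_pos (leq_addr _ _)) addKn rest_eq.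
ring.
Qed.

End EdgeUpdate.

Section MarkedProcess.

Variables (R : realFieldType) (s : R) (n m : nat).
Hypothesis s_pos : 0 < s.
Hypothesis n_pos : (0 < n)%N.

(* Omega_{G,k} is nonempty (put all k particles on one site), so sums of
   positive functions over it are positive; needed for normalizations. *)
Lemma sumOmega_gt0 (k : nat) (F : config n -> R) :
  (forall xi, 0 < F xi) -> 0 < sumOmega k F.
Proof.
move=> F_pos; pose i0 := Ordinal n_pos.
pose f0 : {ffun 'I_n -> 'I_k.+1} := [ffun i => if i == i0 then ord_max else ord0].
have f0_in : (\sum_i (f0 i : nat) == k)%N.
  rewrite (bigD1 i0) //= big1 ?addn0 /f0 ?ffunE ?eqxx //.
  by move=> i /negbTE ii0; rewrite ffunE ii0.
rewrite /sumOmega (bigD1 f0) //=; apply: ltr_pwDl; first exact: F_pos.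
by apply: sumr_ge0 => f _; apply: ltW.
Qed.

Lemma sum_ord_gt0 (F : 'I_n -> R) : (forall i, 0 < F i) -> 0 < \sum_i F i.
Proof.
move=> F_pos; rewrite (bigD1 (Ordinal n_pos)) //=; apply: ltr_pwDl => //.
by apply: sumr_ge0 => i _; apply: ltW.
Qed.

Let Zm : R := sumOmega m (@wBB R s n).

Lemma Zm_neq0 : Zm != 0.
Proof. by apply: lt0r_neq0; apply: sumOmega_gt0 => xi; exact: wBB_gt0. Qed.

Lemma wMaBBE (xi : config n) (y : 'I_n) :
  wMaBB s m xi y = wBB s xi * (s + (xi y)%:R) / Zm.
Proof. by rewrite /wMaBB /piBB mulrAC wBB_addPart. Qed.

Lemma wMaBB_gt0 (xi : config n) (y : 'I_n) : 0 < wMaBB s m xi y.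
Proof.
rewrite wMaBBE; apply: divr_gt0; last by apply: sumOmega_gt0 => z; exact: wBB_gt0.
by apply: mulr_gt0; [exact: wBB_gt0 | apply: ltr_pwDl; rewrite ?ler0n].
Qed.

Variables (v w : 'I_n).
Hypothesis v_neq_w : v != w.

(* Mark on the ringing edge: reversibility of P_e on configurations with the
   mark counted as a particle. *)
Lemma markOn_rev (xi xi' : config n) (y y' : 'I_n) : edgeMove v w xi xi' ->
  wMaBB s m xi y * (PBB s v w xi xi' * Pmark s v w xi xi' y y')
  = wMaBB s m xi' y' * (PBB s v w xi' xi * Pmark s v w xi' xi y' y).
Proof.
move=> mv; have P_neq0 := PBB_neq0 s_pos mv.
have P'_neq0 : PBB s v w xi' xi != 0 by apply: (PBB_neq0 s_pos); rewrite edgeMove_sym.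
move: (mv) => /andP[_ /eqP sum_eq].
have N_neq0 : ((xi v + xi w + 1)%:R : R) != 0 by rewrite pnatr_eq0 addn1.
have rev := wBB_PBB_rev s_pos v_neq_w (addPart xi y) (addPart xi' y').
rewrite /wMaBB /piBB /Pmark sum_eq -/Zm.
move: (xi v + xi w + 1)%:R N_neq0 => N N_neq0.
transitivity (wBB s (addPart xi y) * PBB s v w (addPart xi y) (addPart xi' y')
              * ((xi y + 1)%:R * (xi' y' + 1)%:R / (Zm * N))).
  by field; rewrite Zm_neq0 N_neq0 P_neq0.
by rewrite rev; field; rewrite Zm_neq0 N_neq0 P'_neq0.
Qed.

(* Mark off the ringing edge: it stays put and does not affect the update. *)
Lemma markOff_rev (xi xi' : config n) (y : 'I_n) : ~~ inEdge v w y ->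
  wMaBB s m xi y * PBB s v w xi xi' = wMaBB s m xi' y * PBB s v w xi' xi.
Proof.
move=> y_off; case mv: (edgeMove v w xi xi'); last first.
  by rewrite !PBBE mv (edgeMove_sym v w xi') mv !mulr0.
have xi'y : xi' y = xi y.
  by move: mv y_off => /andP[/forallP off _]; rewrite negb_or => /(implyP (off y))/eqP.
rewrite !wMaBBE xi'y [LHS]mulrAC [RHS]mulrAC.
by rewrite [wBB s xi * _ * _]mulrAC [wBB s xi' * _ * _]mulrAC wBB_PBB_rev.
Qed.

Lemma KMaBB_rev (xi xi' : config n) (y y' : 'I_n) :
  wMaBB s m xi y * KMaBB s v w xi y xi' y' = wMaBB s m xi' y' * KMaBB s v w xi' y' xi y.
Proof.
rewrite /KMaBB; case mv: (edgeMove v w xi xi'); last first.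
  by rewrite !PBBE mv -edgeMove_sym mv !mul0r !mulr0.
case y_on: (inEdge v w y); case y'_on: (inEdge v w y').
- by rewrite markOn_rev.
- have -> : (y == y') = false by apply/eqP => e; rewrite -e y_on in y'_on.
  by rewrite !mulr0.
- have -> : (y' == y) = false by apply/eqP => e; rewrite e y_on in y'_on.
  by rewrite !mulr0.
- have [->|] := eqVneq y' y; last by rewrite !mulr0.
  by rewrite !mulr1 markOff_rev ?y_on.
Qed.

End MarkedProcess.

Section Stationarity.

Variables (R : realFieldType) (s : R) (n m : nat).
Hypothesis s_pos : 0 < s.
Hypothesis n_pos : (0 < n)%N.

Let Z : R := sumOmega m.-1 (fun z => \sum_(y : 'I_n) wMaBB s m z y).

Lemma Z_gt0 : 0 < Z.
Proof.
by apply: sumOmega_gt0 => // xi; apply: sum_ord_gt0 => // y; exact: wMaBB_gt0.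
Qed.

Lemma piMaBB_ge0 (xi : config n) (y : 'I_n) : 0 <= piMaBB s m xi y.
Proof. by apply: divr_ge0; [apply: ltW; exact: wMaBB_gt0 | exact: ltW Z_gt0]. Qed.

Lemma piMaBB_sum1 :
  sumOmega m.-1 (fun xi : config n => \sum_(y : 'I_n) piMaBB s m xi y) = 1.
Proof.
rewrite -[RHS](divff (lt0r_neq0 Z_gt0)) /Z /sumOmega mulr_suml.
by apply: eq_bigr => f _; rewrite mulr_suml.
Qed.

Lemma piMaBB_reversible (E : rel 'I_n) (r : 'I_n -> 'I_n -> R)
    (xi xi' : config n) (y y' : 'I_n) :
  piMaBB s m xi y * genMaBB s E r xi y xi' y'
  = piMaBB s m xi' y' * genMaBB s E r xi' y' xi y.
Proof.
rewrite /genMaBB !mulr_sumr; apply: eq_bigr => v _.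
rewrite !mulr_sumr; apply: eq_bigr => w /andP[vw _].
have v_neq_w : v != w by apply: contraTneq vw => ->; rewrite ltnn.
have K_rev : piMaBB s m xi y * KMaBB s v w xi y xi' y'
             = piMaBB s m xi' y' * KMaBB s v w xi' y' xi y.
  by rewrite /piMaBB mulrAC [RHS]mulrAC KMaBB_rev.
have diag_rev : piMaBB s m xi y * ((xi == xi') && (y == y'))%:R
                = piMaBB s m xi' y' * ((xi' == xi) && (y' == y))%:R.
  by case: eqVneq => [->|]; case: eqVneq => [->|]; rewrite ?mulr0.
by rewrite mulrCA [RHS]mulrCA !mulrBr K_rev diag_rev.
Qed.

Lemma piMaBB_markLaw (xi : config n) (v : 'I_n) : inOmega m.-1 xi ->
  piMaBB s m xi v / (\sum_(y : 'I_n) piMaBB s m xi y)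
  = (s + (xi v)%:R) / (s * n%:R + (m.-1)%:R).
Proof.
move=> xi_in; rewrite /piMaBB -mulr_suml.
have sum_w : \sum_(y : 'I_n) wMaBB s m xi y
             = wBB s xi / sumOmega m (@wBB R s n) * (s * n%:R + (m.-1)%:R).
  rewrite -(eqP xi_in) natr_sum mulr_natr -[X in s *+ X]card_ord -sumr_const.
  by rewrite -big_split mulr_sumr; apply: eq_bigr => y _; rewrite wMaBBE // mulrAC.
have den_neq0 : s * n%:R + (m.-1)%:R != 0.
  by apply: lt0r_neq0; apply: ltr_pwDl; rewrite ?mulr_gt0 ?ltr0n ?ler0n.
have wBB_neq0 := lt0r_neq0 (wBB_gt0 s_pos xi).
rewrite sum_w wMaBBE //; field.
by rewrite den_neq0 wBB_neq0 (Zm_neq0 m s_pos n_pos) (lt0r_neq0 Z_gt0).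
Qed.

End Stationarity.

Lemma markLaw_rational (R : realFieldType) (a b n k x : nat) :
  (0 < a)%N -> (0 < b)%N -> (0 < n)%N ->
  ((b%:R / a%:R : R) + x%:R) / (b%:R / a%:R * n%:R + k%:R)
  = (a * x + b)%:R / (a * k + b * n)%:R.
Proof.
move=> a_pos b_pos n_pos.
have a_neq0 : (a%:R : R) != 0 by rewrite pnatr_eq0 -lt0n.
have den_neq0 : ((a * k + b * n)%:R : R) != 0.
  by rewrite pnatr_eq0 -lt0n addn_gt0 orbC muln_gt0 b_pos n_pos.
move: den_neq0; rewrite !natrD !natrM => den_neq0.
by field; rewrite a_neq0 den_neq0.
Qed.

Theorem mainTheorem5 (R : realFieldType) (n : nat) (E : rel 'I_n)
    (r : 'I_n -> 'I_n -> R) (s : R) (m : nat)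
    (n_pos : (0 < n)%N) (E_sym : symmetric E) (E_irr : irreflexive E)
    (E_conn : forall v w : 'I_n, connect E v w)
    (r_sym : forall v w, r v w = r w v)
    (r_pos : forall v w, E v w -> 0 < r v w)
    (s_pos : 0 < s) (m_ge2 : (2 <= m)%N) :
  (* pi^MaBB is a probability measure on Omega_{G,m-1} x V *)
  ((forall (xi : config n) (y : 'I_n), inOmega m.-1 xi -> 0 <= piMaBB s m xi y) /\
   sumOmega m.-1 (fun xi : config n => \sum_(y : 'I_n) piMaBB s m xi y) = 1) /\
  (* reversibility (detailed balance for the generator) *)
  (forall (xi xi' : config n) (y y' : 'I_n),
      inOmega m.-1 xi -> inOmega m.-1 xi' ->
      piMaBB s m xi y * genMaBB s E r xi y xi' y'
      = piMaBB s m xi' y' * genMaBB s E r xi' y' xi y) /\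
  (* conditional law of the mark when s = b/a *)
  (forall a b : nat, (0 < a)%N -> (0 < b)%N -> coprime a b ->
      s = b%:R / a%:R ->
      forall (xi : config n) (v : 'I_n), inOmega m.-1 xi ->
        piMaBB s m xi v / (\sum_(y : 'I_n) piMaBB s m xi y)
        = (a * xi v + b)%:R / (a * m.-1 + b * n)%:R).
Proof.
split; [split | split].
- by move=> xi y _; exact: piMaBB_ge0.
- exact: piMaBB_sum1.
- by move=> xi xi' y y' _ _; exact: piMaBB_reversible.
- move=> a b a_pos b_pos _ s_eq xi v xi_in.
  by rewrite piMaBB_markLaw // s_eq markLaw_rational.
Qed.
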